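(* Let $m\ge1$ be a fixed integer and let $G_n$ be the preferential attachment graph with parameter $m$. With probability $1-o(1)$ as $n\to\infty$, every vertex $i\in[n]$ with $d_n(i)\ge n^{1/2}/\log^{1/20}n$ satisfies $i\le n/\log^{1/39}n$.
   Context: Preferential attachment graph $G_n$ (Bollobás–Riordan construction): choose $x_1,\dots,x_{2mn}$ independently and uniformly from $[0,1]$; for $i=1,\dots,mn$ let $\{\ell_i,r_i\}=\{x_{2i-1},x_{2i}\}$ with $\ell_i<r_i$. Sort the $r_i$ as $R_1<\dots<R_{mn}$, put $R_0=0$, $W_j=R_{mj}$, $I_j=(W_{j-1},W_j]$. $G_n$ is the multigraph on $[n]$ with one edge $\{x,y\}$ ($x\le y$) for each pair with $\ell_i\in I_x$, $r_i\in I_y$. $d_n(i)$ is the degree of vertex $i$ in $G_n$. *)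

From Stdlib Require Import Reals.
From mathcomp Require Import all_boot all_fingroup.
Set Implicit Arguments. Unset Strict Implicit. Unset Printing Implicit Defensive.

(* A sample is x : nat -> nat; x k (k = 0 .. 2mn-1) plays the role of x_{k+1}.
   Pair i (i = 0 .. mn-1, paper index i+1) is {x (2i), x (2i+1)}. *)
Definition lft (x : nat -> nat) (i : nat) : nat := minn (x i.*2) (x i.*2.+1).
Definition rgt (x : nat -> nat) (i : nat) : nat := maxn (x i.*2) (x i.*2.+1).

(* The sorted right endpoints R_1 < ... < R_mn, with R_0 = 0. *)
Definition Rsorted (m n : nat) (x : nat -> nat) : seq nat :=
  sort leq [seq rgt x i | i <- iota 0 (m * n)].
Definition Rv (m n : nat) (x : nat -> nat) (j : nat) : nat :=
  if j is j'.+1 then nth 0 (Rsorted m n x) j' else 0.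
Definition W (m n : nat) (x : nat -> nat) (j : nat) : nat := Rv m n x (m * j).
Definition inI (m n : nat) (x : nat -> nat) (v j : nat) : bool :=
  (W m n x j.-1 < v <= W m n x j)%N.

(* degree of vertex i in the multigraph G_n: each pair gives one edge
   {vertex of l_k, vertex of r_k}; a loop contributes 2. *)
Definition deg (m n : nat) (x : nat -> nat) (i : nat) : nat :=
  (\sum_(k < m * n) (inI m n x (lft x k) i + inI m n x (rgt x k) i))%N.

(* Ranks: for a permutation s of 'I_(2mn), the sample x_{k+1} := s(k) + 1.
   The graph depends only on the relative order of the x's, and the order
   pattern of 2mn i.i.d. uniform [0,1] variables is a uniform permutation
   (ties have probability 0). *)
Definition rk (N : nat) (s : 'S_N) (k : nat) : nat :=
  oapp (fun o : 'I_N => (s o).+1) 0%N (insub k).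

Definition Rleb (a b : R) : bool := if Rle_dec a b then true else false.

Definition deg_thr (n : nat) : R := Rdiv (sqrt (INR n)) (Rpower (ln (INR n)) (Rinv (IZR 20))).
Definition pos_thr (n : nat) : R := Rdiv (INR n) (Rpower (ln (INR n)) (Rinv (IZR 39))).

Definition bad (m n : nat) (s : 'S_(2 * m * n)) : bool :=
  [exists i : 'I_n.+1,
     [&& (0 < i)%N,
         Rleb (deg_thr n) (INR (deg m n (rk s) i))
       & ~~ Rleb (INR i) (pos_thr n)]].

Definition prob_bad (m n : nat) : R :=
  Rdiv (INR #|[set s : 'S_(2 * m * n) | bad s]|) (INR #|[set: 'S_(2 * m * n)]|).

From Stdlib Require Import Reals Lra.
From mathcomp Require Import all_boot all_fingroup zify.
Set Implicit Arguments. Unset Strict Implicit. Unset Printing Implicit Defensive.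
Local Open Scope nat_scope.

(* Replacing the 2mn uniform points by their ranks, the sample becomes a
   uniform permutation [s] and the pairs induce a uniform perfect matching
   [partner s] of the values 1, ..., 2mn.  Write r for the integer eighth root
   of n.  If vertex i has degree at least K = r^3, the K values following
   a = W_(i-1) lie in I_i, and a >= 2m(i-1) >= 2m r^7 when i > r^7.  Only m
   values of I_i are right endpoints, so at most m values of this window are
   matched to a smaller value: at most m are matched to the left of the window
   and at most 2m inside it.  Switching a window value matched to the right
   with a left value not matched into the window shows that the matchings with
   j values matched to the left are at most (j+1) 2mn / ((K - 2m - j)(a - j))
   times as many as those with j+1.  Five switchings give a factor
   O((mn / (K a))^5) = O(r^-10), and a union bound over the O(r^8) windows
   leaves O(r^-2). *)

Definition mate (k : nat) : nat := if odd k then k.-1 else k.+1.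

Lemma mateK : involutive mate.
Proof.
move=> k; rewrite /mate; case k_odd: (odd k); last by rewrite /= k_odd.
by case: k k_odd => //= k /negbTE ->.
Qed.

Lemma mate_neq k : mate k != k.
Proof. by rewrite /mate; case: ifP => [|_]; [case: k => // k _ | ]; lia. Qed.

Lemma mate_double p : mate p.*2 = p.*2.+1.
Proof. by rewrite /mate odd_double. Qed.

Lemma mate_doubleS p : mate p.*2.+1 = p.*2.
Proof. by rewrite /mate /= odd_double. Qed.

Section Matching.

Variable N : nat.
Hypothesis N_even : ~~ odd N.

Lemma mate_lt k : k < N -> mate k < N.
Proof.
rewrite /mate; case: ifP => [|k_even lt_kN]; first lia.
rewrite ltn_neqAle lt_kN andbT; apply: contraNneq N_even => <-.
by rewrite /= k_even.
Qed.

Definition ord_mate (k : 'I_N) : 'I_N := insubd k (mate k).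

Lemma val_ord_mate k : val (ord_mate k) = mate k.
Proof. by rewrite val_insubd mate_lt. Qed.

Lemma ord_mateK : involutive ord_mate.
Proof. by move=> k; apply: val_inj; rewrite !val_ord_mate mateK. Qed.

(* The matching of values induced by [s]: [v] and [partner s v] are the values
   of [s] at the two positions of one pair. *)
Definition partner (s : 'S_N) (v : 'I_N) : 'I_N := s (ord_mate ((s^-1)%g v)).

Lemma partnerK s : involutive (partner s).
Proof. by move=> v; rewrite /partner permK ord_mateK permKV. Qed.

Lemma partner_inj s : injective (partner s).
Proof. exact: inv_inj (partnerK s). Qed.

Lemma partner_neq s v : partner s v != v.
Proof.
apply/eqP => /(congr1 (s^-1)%g); rewrite /partner permK => /(congr1 val).
by rewrite val_ord_mate; apply/eqP; exact: mate_neq.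
Qed.

Lemma partner_tperm s u w x :
  partner (s * tperm u w) x = tperm u w (partner s (tperm u w x)).
Proof. by rewrite /partner invMg permM !permM tpermV. Qed.

End Matching.

Lemma card_setX_dep (A B : finType) (P : pred A) (Q : A -> pred B) :
  #|[set t : A * B | P t.1 && Q t.1 t.2]| = \sum_(x | P x) #|[set y | Q x y]|.
Proof.
rewrite -sum1dep_card (eq_bigr (fun x => \sum_(y | Q x y) 1)) ?pair_big_dep //.
by move=> x _; rewrite sum1dep_card.
Qed.

Lemma card_ord_interval N lo hi : #|[set x : 'I_N | lo <= x < hi]| = minn N hi - lo.
Proof.
rewrite -sum1dep_card big_mkcond /=.
elim: N => [|N IH]; first by rewrite big_ord0 min0n.
rewrite big_ord_recr /= IH; case: ifP; lia.
Qed.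

Section Switching.

Variables N a K : nat.
Hypothesis N_even : ~~ odd N.

(* A value [v : 'I_N] stands for the rank [v.+1], so the window [a <= v < a + K]
   is the interval (a, a + K] of ranks. *)
Definition in_window (x : nat) : bool := a <= x < a + K.

Definition crossing (s : 'S_N) : {set 'I_N} :=
  [set x : 'I_N | in_window x && (partner s x < a)].

Definition inner (s : 'S_N) : {set 'I_N} :=
  [set x : 'I_N | in_window x && in_window (partner s x)].

Definition switch_class (c j : nat) : {set 'S_N} :=
  [set s | (#|inner s| <= c.*2) && (#|crossing s| == j)].

Definition switchable (s : 'S_N) (vu : 'I_N * 'I_N) : bool :=
  [&& in_window vu.1, a + K <= partner s vu.1, vu.2 < a
    & ~~ in_window (partner s vu.2)].

(* Swapping the values [u] and [partner s v] in [s] matches [v] with [u], and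
   the old partners of [v] and [u] with each other. *)
Definition switch (s : 'S_N) (v u : 'I_N) : 'S_N := (s * tperm u (partner s v))%g.

Lemma partner_switch s v u (x : 'I_N) : switchable s (v, u) -> in_window x ->
  partner (switch s v u) x = if x == v then u else partner s x.
Proof.
case/and4P=> /= _ right_v lt_ua out_u win_x.
have ux : u != x by apply: contraTneq win_x => <-; rewrite /in_window; lia.
have wx : partner s v != x by apply: contraTneq win_x => <-; rewrite /in_window; lia.
rewrite /switch partner_tperm (tpermD ux wx); case: eqP => [->|/eqP xv].
  by rewrite tpermR.
have uw : u != partner s x by apply: contra out_u => /eqP->; rewrite (partnerK N_even).
have ww : partner s v != partner s x by rewrite (inj_eq (@partner_inj _ N_even s)) eq_sym.
by rewrite (tpermD uw ww).
Qed.

Lemma crossing_switch s v u : switchable s (v, u) ->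
  crossing (switch s v u) = v |: crossing s.
Proof.
move=> sw; have /and4P[/= win_v _ lt_ua _] := sw.
apply/setP => x; rewrite !inE; case win_x: (in_window x) => /=.
  by rewrite (partner_switch sw win_x); case: eqP => // ->.
by rewrite orbF; case: eqP win_x => // ->; rewrite win_v.
Qed.

Lemma inner_switch s v u : switchable s (v, u) -> inner (switch s v u) = inner s.
Proof.
move=> sw; have /and4P[/= _ right_v lt_ua _] := sw.
apply/setP => x; rewrite !inE; case win_x: (in_window x) => //=.
rewrite (partner_switch sw win_x); case: eqP => // ->.
by rewrite /in_window; apply/idP/idP; lia.
Qed.

Lemma switchable_notin_crossing s v u : switchable s (v, u) -> v \notin crossing s.
Proof. by case/and4P=> /= _ right_v _ _; rewrite inE; lia. Qed.

Lemma double_card_crossing_inner s :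
  (#|crossing s|).*2 + #|inner s| <=
  (#|[set v : 'I_N | in_window v && (partner s v < v)]|).*2.
Proof.
set I1 := [set x | (x \in inner s) && (partner s x < x)].
have inner_split : inner s = I1 :|: partner s @: I1.
  apply/setP => x; rewrite !inE; apply/idP/idP.
    case/andP=> win_x win_px; case: (ltngtP (partner s x) x) => [lt|gt|/val_inj eq].
    - by rewrite win_x win_px.
    - apply/orP; right; apply/imsetP; exists (partner s x); last by rewrite (partnerK N_even).
      by rewrite !inE (partnerK N_even) win_x win_px gt.
    - by move: (partner_neq N_even s x); rewrite eq eqxx.
  case/orP=> [/andP[/andP[-> ->] //] | /imsetP[y]].
  by rewrite !inE => /andP[/andP[win_y win_py] _] ->; rewrite (partnerK N_even) win_y win_py.
have card_inner : #|inner s| = (#|I1|).*2.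
  rewrite inner_split cardsU card_imset; last exact: (@partner_inj _ N_even s).
  suff -> : I1 :&: partner s @: I1 = set0 by rewrite cards0 subn0 addnn.
  apply/setP => x; rewrite !inE; apply/negbTE/andP => -[/andP[_ lt] /imsetP[y]].
  by rewrite inE => /andP[_ lt'] eq; move: lt; rewrite eq (partnerK N_even); lia.
have card_cross_I1 : #|crossing s :|: I1| = #|crossing s| + #|I1|.
  rewrite cardsU; suff -> : crossing s :&: I1 = set0 by rewrite cards0 subn0.
  apply/setP => x; rewrite !inE /in_window; lia.
have : #|crossing s :|: I1| <= #|[set v : 'I_N | in_window v && (partner s v < v)]|.
  apply/subset_leq_card/subsetP => x; rewrite !inE /in_window; lia.
rewrite card_inner card_cross_I1; lia.
Qed.

Hypothesis window_le : a + K <= N.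

Lemma card_window_right s :
  K - #|crossing s| - #|inner s| <=
  #|[set v : 'I_N | in_window v && (a + K <= partner s v)]|.
Proof.
set V := [set v | _].
have : [set x : 'I_N | a <= x < a + K] \subset V :|: crossing s :|: inner s.
  by apply/subsetP => x; rewrite !inE /in_window; lia.
move/subset_leq_card; rewrite card_ord_interval.
have U1 : #|V :|: crossing s| <= #|V| + #|crossing s| := leq_card_setU _ _.
have U2 : #|V :|: crossing s :|: inner s| <= #|V :|: crossing s| + #|inner s|
  := leq_card_setU _ _.
lia.
Qed.

Lemma card_left_unmatched s :
  a - #|crossing s| <= #|[set u : 'I_N | (u < a) && ~~ in_window (partner s u)]|.
Proof.
set U := [set u | _].
have : [set x : 'I_N | 0 <= x < a] \subset U :|: partner s @: crossing s.
  apply/subsetP => x; rewrite inE /= => lt_xa; apply/setUP.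
  case win: (in_window (partner s x)); last by left; rewrite inE lt_xa win.
  right; apply/imsetP; exists (partner s x); last by rewrite (partnerK N_even).
  by rewrite inE win (partnerK N_even).
move/subset_leq_card; rewrite card_ord_interval.
have : #|U :|: partner s @: crossing s| <= #|U| + #|crossing s|.
  by rewrite -[#|crossing s|](card_imset _ (@partner_inj _ N_even s)) leq_card_setU.
lia.
Qed.

Lemma card_switchable c j s : s \in switch_class c j ->
  (K - j - c.*2) * (a - j) <= #|[set p | switchable s p]|.
Proof.
rewrite inE => /andP[inner_le /eqP cross_j].
have -> : [set p | switchable s p] =
    setX [set v : 'I_N | in_window v && (a + K <= partner s v)]
         [set u : 'I_N | (u < a) && ~~ in_window (partner s u)].
  by apply/setP => -[v u]; rewrite !inE /switchable -!andbA.
rewrite cardsX; apply: leq_mul; rewrite -cross_j.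
  by apply: leq_trans (card_window_right s); lia.
exact: card_left_unmatched.
Qed.

(* Double counting of switchings [(s, (v, u)) |-> (switch s v u, (v, partner s v))]. *)
Lemma card_switch_class_step c j :
  #|switch_class c j| * ((K - j - c.*2) * (a - j)) <=
  #|switch_class c j.+1| * (j.+1 * N).
Proof.
pose T := [set t : 'S_N * ('I_N * 'I_N) |
  (t.1 \in switch_class c j) && switchable t.1 t.2].
pose T' := [set t : 'S_N * ('I_N * 'I_N) |
  (t.1 \in switch_class c j.+1) && (t.2.1 \in crossing t.1)].
pose f (t : 'S_N * ('I_N * 'I_N)) :=
  (switch t.1 t.2.1 t.2.2, (t.2.1, partner t.1 t.2.1)).
have card_T : #|switch_class c j| * ((K - j - c.*2) * (a - j)) <= #|T|.
  rewrite (card_setX_dep (mem (switch_class c j)) switchable) -sum_nat_const.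
  by apply: leq_sum => s; exact: card_switchable.
have card_T' : #|T'| = #|switch_class c j.+1| * (j.+1 * N).
  rewrite (card_setX_dep (mem (switch_class c j.+1)) (fun s p => p.1 \in crossing s)).
  rewrite -sum_nat_const; apply: eq_bigr => s; rewrite !inE => /andP[_ /eqP cross_s].
  have -> : [set y : 'I_N * 'I_N | y.1 \in crossing s] = setX (crossing s) setT.
    by apply/setP => y; rewrite !inE andbT.
  by rewrite cardsX cardsT card_ord cross_s.
have f_inj : {in T &, injective f}.
  move=> [s1 [v u1]] [s2 [v2 u2]]; rewrite !inE /= => /andP[_ sw1] /andP[_ sw2].
  case=> e_s e_v e_w; subst v2.
  have win_v : in_window v by case/and4P: sw1.
  have e_u : u1 = u2.
    have := partner_switch sw2 win_v; have := partner_switch sw1 win_v.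
    by rewrite !eqxx e_s => -> ->.
  by move: e_s; rewrite /switch e_u e_w => /mulIg ->.
have f_T : f @: T \subset T'.
  apply/subsetP => t /imsetP[[s [v u]]].
  rewrite !inE /= => /andP[/andP[inner_le /eqP cross_j] sw] ->.
  have /and4P[/= win_v _ lt_ua _] := sw.
  rewrite crossing_switch // inner_switch // cardsU1.
  rewrite (switchable_notin_crossing sw) (partner_switch sw win_v) eqxx.
  by rewrite inner_le cross_j win_v lt_ua add1n eqxx.
by rewrite (leq_trans card_T) // -card_T' -(card_in_imset f_inj) subset_leq_card.
Qed.

Lemma card_switch_class_iter c j R :
  #|switch_class c j| * ((K - (j + R) - c.*2) * (a - (j + R))) ^ R <=
  #|switch_class c (j + R)| * ((j + R) * N) ^ R.
Proof.
elim: R j => [|R IH] j; first by rewrite addn0 !expn0.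
set A := (K - (j + R.+1) - c.*2) * (a - (j + R.+1)).
set B := (j + R.+1) * N.
have A_le : A <= (K - j - c.*2) * (a - j) by apply: leq_mul; lia.
have B_ge : j.+1 * N <= B by apply: leq_mul; lia.
have step := leq_trans (leq_mul (leqnn #|switch_class c j|) A_le)
  (leq_trans (card_switch_class_step c j) (leq_mul (leqnn _) B_ge)).
have := IH j.+1; rewrite addSnnS -/A -/B => IH'.
rewrite !expnS mulnA (leq_trans (leq_mul step (leqnn _))) //.
by rewrite mulnAC mulnC [X in _ <= X]mulnCA leq_mul2l IH' orbT.
Qed.

Lemma card_switch_class_le c j R a0 : 0 < R -> j <= c -> a0 <= a ->
  #|switch_class c j| * ((K - (c + R) - c.*2) * (a0 - (c + R))) ^ R <=
  N`! * ((c + R) * N) ^ R.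
Proof.
move=> R_gt0 le_jc le_a0a.
apply: leq_trans (leq_trans (card_switch_class_iter c j R) _).
  by rewrite leq_mul // leq_exp2r // leq_mul //; lia.
rewrite leq_mul // ?leq_exp2r ?leq_mul //; last lia.
by rewrite -card_Sn -cardsT subset_leq_card ?subsetT.
Qed.

End Switching.

Lemma sum_count (T : Type) (r : seq T) (P : pred T) :
  \sum_(j <- r) (P j : nat) = count P r.
Proof. by rewrite -sum1_count [RHS]big_mkcond; apply: eq_bigr => j _; case: (P j). Qed.

Lemma sum_pairs (F : nat -> nat) M :
  \sum_(0 <= k < M.*2) F k = \sum_(0 <= p < M) (F p.*2 + F p.*2.+1).
Proof.
elim: M => [|M IH]; first by rewrite !big_geq.
by rewrite doubleS !big_nat_recr //= IH addnA.
Qed.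

Lemma count_split (s : seq nat) a b : a <= b ->
  count (fun r => r <= b) s =
  count (fun r => r <= a) s + count (fun r => a < r <= b) s.
Proof. by move=> le_ab; elim: s => //= r s ->; case: leqP; case: leqP; lia. Qed.

Lemma count_le_nth (s : seq nat) p : sorted ltn s -> p < size s ->
  count (fun r => r <= nth 0 s p) s = p.+1.
Proof.
elim: s p => [|r s IH] p //= r_s lt_p.
have r_lt : all (fun y => r < y) s by apply: order_path_min r_s; exact: ltn_trans.
have {}IH := IH _ (path_sorted r_s).
case: p lt_p => [|p] lt_p /=.
  rewrite leqnn add1n -[in RHS](count_pred0 s); congr _.+1; apply: eq_in_count.
  by move=> y /(allP r_lt); rewrite ltnNge => /negbTE.
by rewrite (ltnW (allP r_lt _ (mem_nth 0 _))) ?IH.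
Qed.

Section Sample.

Variables (m n : nat) (x : nat -> nat).
Hypothesis x_pos : forall k, k < (m * n).*2 -> 0 < x k.
Hypothesis x_inj : {in gtn (m * n).*2 &, injective x}.

Lemma deg_sum i : deg m n x i = \sum_(0 <= k < (m * n).*2) inI m n x (x k) i.
Proof.
rewrite /deg -(big_mkord xpredT (fun k => inI m n x (lft x k) i + inI m n x (rgt x k) i)) sum_pairs.
apply: eq_bigr => p _.
by rewrite /lft /rgt /minn /maxn; case: ltnP => // _; rewrite addnC.
Qed.

Let rights := [seq rgt x p | p <- iota 0 (m * n)].

Lemma sorted_Rsorted : sorted ltn (Rsorted m n x).
Proof.
have uniq_rights : uniq rights.
  rewrite map_inj_in_uniq ?iota_uniq // => p q; rewrite !mem_iota !add0n => lt_p lt_q.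
  rewrite /rgt /maxn; case: ltnP => _; case: ltnP => _ /x_inj; rewrite !inE; lia.
rewrite ltn_sorted_uniq_leq sort_uniq uniq_rights.
exact: (sort_sorted leq_total).
Qed.

Lemma count_rgt_le_W j : j <= n -> count (fun r => r <= W m n x j) rights = m * j.
Proof.
move=> le_jn; rewrite -(count_sort leq) /W /Rv.
case mj: (m * j) => [|p].
  apply/eqP; rewrite -leqn0 leqNgt -has_count; apply/hasPn => r.
  rewrite mem_sort => /mapP[q]; rewrite mem_iota add0n => lt_q ->.
by rewrite -ltnNge /rgt (leq_trans (x_pos (k := q.*2) _) (leq_maxl _ _)) //; lia.
rewrite count_le_nth ?sorted_Rsorted // size_sort size_map size_iota.
by move: (leq_mul (leqnn m) le_jn); rewrite mj.
Qed.

Lemma count_rgt_between i : 0 < i <= n -> W m n x i.-1 <= W m n x i ->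
  count (fun r => W m n x i.-1 < r <= W m n x i) rights = m.
Proof.
case: i => // i /= le_in le_W.
have := count_split rights le_W; rewrite !count_rgt_le_W //; last lia.
rewrite mulnS; lia.
Qed.

End Sample.

Section Ranks.

Variable N : nat.
Hypothesis N_even : ~~ odd N.
Variable s : 'S_N.

Lemma rk_ord (k : 'I_N) : rk s k = (s k).+1.
Proof. by rewrite /rk valK. Qed.

Lemma rk_pos k : k < N -> 0 < rk s k.
Proof. by move=> lt_kN; rewrite (rk_ord (Ordinal lt_kN)). Qed.

Lemma rk_inj : {in gtn N &, injective (rk s)}.
Proof.
move=> k1 k2 lt1 lt2; rewrite (rk_ord (Ordinal lt1)) (rk_ord (Ordinal lt2)).
by case=> /val_inj /perm_inj [].
Qed.

Lemma rk_mate (k : 'I_N) : rk s (mate k) = (partner s (s k)).+1.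
Proof. by rewrite -(val_ord_mate N_even) rk_ord /partner permK. Qed.

Lemma sum_rk_mate (Q : nat -> nat -> bool) :
  \sum_(0 <= k < N) Q (rk s k) (rk s (mate k)) =
  #|[set v : 'I_N | Q v.+1 (partner s v).+1]|.
Proof.
have -> : [set v : 'I_N | Q v.+1 (partner s v).+1] =
    s @: [set k | Q (s k).+1 (partner s (s k)).+1].
  apply/setP => v; apply/idP/imsetP => [|[k]]; rewrite !inE; last by move=> Q_k ->.
  by exists ((s^-1)%g v); rewrite ?inE permKV.
rewrite card_imset; last exact: perm_inj.
rewrite big_mkord -sum1dep_card [RHS]big_mkcond; apply: eq_bigr => k _ /=.
by rewrite rk_ord rk_mate; case: ifP.
Qed.

End Ranks.

Section HighDegreeVertex.

Variables (m n : nat) (s : 'S_(2 * m * n)).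

Local Notation N := (2 * m * n).

Let N_double : N = (m * n).*2.
Proof. by rewrite -mulnA mul2n. Qed.

Let N_even : ~~ odd N.
Proof. by rewrite N_double odd_double. Qed.

Let sample_pos k : k < (m * n).*2 -> 0 < rk s k.
Proof. by rewrite -N_double; exact: rk_pos. Qed.

Let sample_inj : {in gtn (m * n).*2 &, injective (rk s)}.
Proof. by rewrite -N_double; exact: rk_inj. Qed.

Let card_partner_pairs (Q : nat -> nat -> bool) :
  #|[set v : 'I_N | Q v.+1 (partner s v).+1]| =
  \sum_(p <- iota 0 (m * n)) (Q (rk s p.*2) (rk s p.*2.+1) + Q (rk s p.*2.+1) (rk s p.*2)).
Proof.
rewrite -(sum_rk_mate N_even) (_ : index_iota 0 N = index_iota 0 (m * n).*2).
  rewrite sum_pairs /index_iota !subn0.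
  by apply: eq_bigr => p _; rewrite mate_double mate_doubleS.
by rewrite N_double.
Qed.

Variable i : nat.
Hypothesis i_range : 0 < i <= n.

Let a := W m n (rk s) i.-1.
Let b := W m n (rk s) i.

Lemma deg_rk : deg m n (rk s) i = minn N b - a.
Proof.
rewrite deg_sum -N_double (sum_rk_mate N_even s (fun y _ => inI m n (rk s) y i)).
by rewrite -card_ord_interval; apply: eq_card => v; rewrite !inE.
Qed.

Lemma card_right_endpoints_le : a <= b ->
  #|[set v : 'I_N | (a <= v < b) && (partner s v < v)]| <= m.
Proof.
move=> le_ab; rewrite -[X in _ <= X](count_rgt_between sample_pos sample_inj i_range le_ab).
have -> : [set v : 'I_N | (a <= v < b) && (partner s v < v)] =
    [set v : 'I_N | (a < v.+1 <= b) && ((partner s v).+1 < v.+1)].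
  by apply/setP => v; rewrite !inE.
rewrite (card_partner_pairs (fun y z => (a < y <= b) && (z < y))) count_map -sum_count.
apply: leq_sum => p _ /=.
rewrite /rgt /maxn; move: (rk s p.*2) (rk s p.*2.+1) => u w.
rewrite -/a -/b; case: (ltnP u w); case: (ltnP a u); case: (ltnP a w); case: (leqP u b);
by case: (leqP w b) => /=; lia.
Qed.

Lemma W_pred_ge : (m * i.-1).*2 <= a.
Proof.
have card_lt_a : #|[set v : 'I_N | v < a]| <= a.
  by have := card_ord_interval N 0 a; rewrite (eq_card (B := [set v : 'I_N | v < a])) // => ->; lia.
apply: leq_trans card_lt_a; rewrite (card_partner_pairs (fun y _ => y <= a)).
rewrite -(count_rgt_le_W sample_pos sample_inj (j := i.-1)); last lia.
rewrite count_map -sum_count -mul2n big_distrr; apply: leq_sum => p _ /=.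
rewrite /rgt /maxn; move: (rk s p.*2) (rk s p.*2.+1) => u w.
by rewrite -/a; case: (ltnP u w); case: (leqP u a); case: (leqP w a) => /=; lia.
Qed.

(* Window values matched to a smaller value are right endpoints in I_i, and
   exactly m right endpoints lie in I_i. *)
Lemma high_degree_switch_class K : 0 < K -> K <= deg m n (rk s) i ->
  [/\ a + K <= N, (m * i.-1).*2 <= a
     & exists2 j, j <= m & s \in switch_class N a K m j].
Proof.
rewrite deg_rk => K_gt0 le_K.
have le_ab : a + K <= b by lia.
split; [lia | exact: W_pred_ge |].
have right_le : #|[set v : 'I_N | in_window a K v && (partner s v < v)]| <= m.
  apply: leq_trans (card_right_endpoints_le (leq_trans (leq_addr _ _) le_ab)).
  by apply/subset_leq_card/subsetP => v; rewrite !inE /in_window; lia.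
have := double_card_crossing_inner a K N_even s; rewrite -!mul2n.
move/leq_trans/(_ (leq_mul (leqnn 2) right_le)) => bound.
exists #|crossing a K s|; first lia.
by rewrite inE eqxx andbT; lia.
Qed.

End HighDegreeVertex.

Lemma exists_iroot k n : 0 < k -> exists r, r ^ k <= n < r.+1 ^ k.
Proof.
move=> k_gt0; elim: n => [|n [r /andP[le_r lt_r]]].
  by exists 0; rewrite exp0n // exp1n.
case: (ltnP n.+1 (r.+1 ^ k)) => [lt_n1 | le_n1]; first by exists r; rewrite ltnW.
exists r.+1; have -> : n.+1 = r.+1 ^ k by apply/eqP; rewrite eqn_leq lt_r.
by rewrite leqnn /= ltn_exp2r.
Qed.

Section Thresholds.

Local Open Scope R_scope.

Lemma Rle_div_of_mul (a b c : R) : 0 < c -> a * c <= b -> a <= b / c.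
Proof.
move=> c_pos le_ac; apply: (Rmult_le_reg_r c) => //.
by rewrite /Rdiv Rmult_assoc Rinv_l ?Rmult_1_r //; lra.
Qed.

Lemma INR_expn (r k : nat) : INR (r ^ k) = INR r ^ k.
Proof. by elim: k => [|k IH] //; rewrite expnS mult_INR IH. Qed.

Lemma ln_le_self x : 0 < x -> ln x <= x.
Proof. by move=> x_pos; have := exp_ineq1_le (ln x); rewrite exp_ln //; lra. Qed.

Lemma Rpower_ln_le_root8 x e : 1 < x -> 0 < e <= / 8 -> Rpower (ln x) e <= Rpower x (/ 8).
Proof.
move=> x_gt1 e_range; have ln_pos : 0 < ln x by rewrite -ln_1; apply: ln_increasing; lra.
apply: (Rle_trans _ (Rpower x e)).
  by apply: Rle_Rpower_l; [lra | split; [exact: ln_pos | apply: ln_le_self; lra]].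
by apply: Rle_Rpower; lra.
Qed.

Lemma INR_le_root8 (r n : nat) : (0 < r)%N -> (r ^ 8 <= n)%N ->
  INR r <= Rpower (INR n) (/ 8).
Proof.
move=> r_gt0 le_rn; have r_pos : 0 < INR r by apply: (lt_INR 0); apply/ltP.
have -> : INR r = Rpower (INR (r ^ 8)) (/ 8).
  rewrite INR_expn -Rpower_pow // Rpower_mult (_ : INR 8 * / 8 = 1).
    by rewrite Rpower_1.
  by rewrite /=; field.
apply: Rle_Rpower_l; first lra.
split; first by rewrite INR_expn; apply: pow_lt.
by apply: le_INR; apply/leP.
Qed.

(* The thresholds are [n^(4/8)] and [n^(8/8)] divided by a power of [ln n]
   at most [n^(1/8)], so they dominate [r^3] and [r^7] once [r^8 <= n]. *)
Lemma pow_le_root8_div (n r k : nat) e : (1 < n)%N -> (0 < r)%N -> (r ^ 8 <= n)%N ->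
  0 < e <= / 8 ->
  INR (r ^ k) <= Rpower (INR n) (INR k.+1 / 8) / Rpower (ln (INR n)) e.
Proof.
move=> n_gt1 r_gt0 le_rn e_range.
have n_gt1R : 1 < INR n by apply: (lt_INR 1); apply/ltP.
set y := Rpower (INR n) (/ 8).
have y_pos : 0 < y by apply: exp_pos.
have r_le_y : INR r <= y by apply: INR_le_root8.
have P_pos : 0 < Rpower (ln (INR n)) e by apply: exp_pos.
have P_le_y : Rpower (ln (INR n)) e <= y by apply: Rpower_ln_le_root8.
have -> : Rpower (INR n) (INR k.+1 / 8) = y ^ k.+1.
  by rewrite -Rpower_pow // Rpower_mult /Rdiv Rmult_comm.
apply: Rle_div_of_mul => //; rewrite INR_expn -tech_pow_Rmult Rmult_comm.
apply: Rmult_le_compat => //; [lra | apply: pow_le; exact: pos_INR |].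
by apply: pow_incr; split; first exact: pos_INR.
Qed.

Lemma deg_thr_ge (n r : nat) : (1 < n)%N -> (0 < r)%N -> (r ^ 8 <= n)%N ->
  INR (r ^ 3) <= deg_thr n.
Proof.
move=> n_gt1 r_gt0 le_rn; have n_pos : 0 < INR n by apply: (lt_INR 0); apply/ltP; lia.
rewrite /deg_thr -Rpower_sqrt // (_ : / 2 = INR 4 / 8); last by rewrite /=; field.
by apply: pow_le_root8_div => //; lra.
Qed.

Lemma pos_thr_ge (n r : nat) : (1 < n)%N -> (0 < r)%N -> (r ^ 8 <= n)%N ->
  INR (r ^ 7) <= pos_thr n.
Proof.
move=> n_gt1 r_gt0 le_rn.
rewrite /pos_thr -{1}[INR n]Rpower_1; last by apply: (lt_INR 0); apply/ltP; lia.
rewrite (_ : 1 = INR 8 / 8); last by rewrite /=; field.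
by apply: pow_le_root8_div => //; lra.
Qed.

End Thresholds.

Lemma card_bigcup_le (I T : finType) (P : pred I) (F : I -> {set T}) :
  #|\bigcup_(i | P i) F i| <= \sum_(i | P i) #|F i|.
Proof.
elim/big_rec2: _ => [|i B n _ IH]; first by rewrite cards0.
by apply: leq_trans (leq_card_setU _ _) _; rewrite leq_add2l.
Qed.

Lemma sum_ord_const_le n (P : pred 'I_n) c : \sum_(i < n | P i) c <= n * c.
Proof. by rewrite -[X in X * c]card_ord -sum_nat_const [X in _ <= X](bigID P) leq_addr. Qed.

(* Collects [2mn + 1 <= 513 m r^8], [(m + 5) 2mn <= 512 m (m + 5) r^8] and
   [r^50 <= 32 A^5] for the switching factor [A], see [card_bad_le]. *)
Definition bad_const (m : nat) : nat :=
  32 * (513 * m * m.+1 * (512 * m * (m + 5)) ^ 5).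

Section BadEvent.

Variables m n r : nat.
Hypothesis m_gt0 : 0 < m.
Hypothesis r_large : 6 * m + 10 <= r.
Hypothesis r_root : r ^ 8 <= n < r.+1 ^ 8.

Local Notation N := (2 * m * n).
Local Notation K := (r ^ 3).

Let n_gt1 : 1 < n.
Proof.
case/andP: r_root => le_rn _; apply: leq_trans le_rn.
by rewrite -(exp1n 8) ltn_exp2r //; lia.
Qed.

Let r_gt0 : 0 < r.
Proof. lia. Qed.

Lemma bad_high_degree_vertex (s : 'S_N) : bad s ->
  exists2 i, 0 < i <= n & (K <= deg m n (rk s) i) && (r ^ 7 <= i.-1).
Proof.
case/existsP=> i /and3P[i_gt0]; rewrite /Rleb.
case: Rle_dec => // le_deg _; case: Rle_dec => // lt_pos _.
have le_rn : r ^ 8 <= n by case/andP: r_root.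
exists i; first by rewrite i_gt0 -ltnS ltn_ord.
apply/andP; split.
  by apply/leP/INR_le; apply: Rle_trans (deg_thr_ge n_gt1 r_gt0 le_rn) le_deg.
suff : r ^ 7 < i by lia.
by apply/ltP/INR_lt; apply: Rle_lt_trans (pos_thr_ge n_gt1 r_gt0 le_rn) (Rnot_le_lt _ _ lt_pos).
Qed.

Lemma bad_sub_switch_classes :
  [set s : 'S_N | bad s] \subset
  \bigcup_(a < N.+1 | ((m * r ^ 7).*2 <= a) && (a + K <= N))
    \bigcup_(j < m.+1) switch_class N a K m j.
Proof.
apply/subsetP => s; rewrite inE => /bad_high_degree_vertex[i i_range /andP[le_deg le_i]].
have K_gt0 : 0 < K by rewrite expn_gt0 r_gt0.
have [le_aN le_a [j le_jm s_in]] := high_degree_switch_class i_range K_gt0 le_deg.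
have lt_a : W m n (rk s) i.-1 < N.+1 by rewrite ltnS (leq_trans (leq_addr _ _) le_aN).
apply/bigcupP; exists (Ordinal lt_a); rewrite /= ?le_aN ?andbT.
  by apply: leq_trans le_a; rewrite leq_double leq_mul2l le_i orbT.
have lt_jm : j < m.+1 by [].
by apply/bigcupP; exists (Ordinal lt_jm).
Qed.

Lemma card_bad_mul_le :
  #|[set s : 'S_N | bad s]| * ((K - (m + 5) - m.*2) * ((m * r ^ 7).*2 - (m + 5))) ^ 5 <=
  N.+1 * (m.+1 * (N`! * ((m + 5) * N) ^ 5)).
Proof.
have N_even : ~~ odd N by rewrite -mulnA mul2n odd_double.
apply: leq_trans (leq_mul (subset_leq_card bad_sub_switch_classes) (leqnn _)) _.
apply: leq_trans (leq_mul (card_bigcup_le _ _) (leqnn _)) _.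
rewrite big_distrl /=; apply: leq_trans _ (sum_ord_const_le _ _).
apply: leq_sum => a /andP[le_a le_aN].
apply: leq_trans (leq_mul (card_bigcup_le _ _) (leqnn _)) _.
rewrite big_distrl /=; apply: leq_trans _ (sum_ord_const_le _ _).
by apply: leq_sum => j _; apply: card_switch_class_le; rewrite // -ltnS.
Qed.

Lemma switch_factor_ge :
  r ^ 10 <= 2 * ((K - (m + 5) - m.*2) * ((m * r ^ 7).*2 - (m + 5))).
Proof.
have le_r3 : r <= r ^ 3 by rewrite -{1}(expn1 r) leq_pexp2l //; lia.
have le_r7 : r <= r ^ 7 by rewrite -{1}(expn1 r) leq_pexp2l //; lia.
rewrite (_ : 10 = 3 + 7) // expnD; move: (r ^ 3) (r ^ 7) le_r3 le_r7 => x y le_x le_y.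
have le_x2 : x <= 2 * (x - (m + 5) - m.*2) by lia.
have le_y2 : y <= (m * y).*2 - (m + 5).
  rewrite -mul2n; have : y <= m * y by rewrite leq_pmull. lia.
by have := leq_mul le_x2 le_y2; rewrite mulnA.
Qed.

Lemma card_bad_le : #|[set s : 'S_N | bad s]| * r ^ 2 <= bad_const m * N`!.
Proof.
pose A := (K - (m + 5) - m.*2) * ((m * r ^ 7).*2 - (m + 5)).
pose c := 512 * m * (m + 5).
have n_le : n <= 256 * r ^ 8.
  case/andP: r_root => _ /ltnW /leq_trans; apply.
  by rewrite (_ : 256 = 2 ^ 8) // -expnMn leq_exp2r //; lia.
have N1_le : N.+1 <= 513 * m * r ^ 8.
  have : 0 < m * r ^ 8 by rewrite muln_gt0 m_gt0 expn_gt0 r_gt0.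
  by have := leq_mul (leqnn (2 * m)) n_le; move: (r ^ 8) => R8; lia.
have B5_le : ((m + 5) * N) ^ 5 <= c ^ 5 * r ^ 40.
  rewrite (_ : 40 = 8 * 5) // expnM -expnMn leq_exp2r // /c.
  have := leq_mul (leqnn ((m + 5) * (2 * m))) n_le; move: (r ^ 8) => R8; lia.
have A5_ge : (r ^ 10) ^ 5 <= 32 * A ^ 5.
  by rewrite (_ : 32 = 2 ^ 5) // -expnMn leq_exp2r // switch_factor_ge.
have r48_gt0 : 0 < r ^ 48 by rewrite expn_gt0 r_gt0.
rewrite -(leq_pmul2r r48_gt0) -mulnA -expnD (_ : 2 + 48 = 10 * 5) // expnM.
apply: leq_trans (leq_mul (leqnn _) A5_ge) _.
rewrite mulnCA; apply: leq_trans (leq_mul (leqnn 32) card_bad_mul_le) _.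
have B_le := leq_mul (leqnn m.+1) (leq_mul (leqnn N`!) B5_le).
apply: leq_trans (leq_mul (leqnn 32) (leq_mul N1_le B_le)) _.
rewrite /bad_const -/c (_ : 48 = 8 + 40) // expnD.
move: (r ^ 8) (r ^ 40) (c ^ 5) => x y z.
by apply: eq_leq; lia.
Qed.

End BadEvent.

Local Open Scope R_scope.

Lemma prob_bad_le m n r : (0 < m)%N -> (6 * m + 10 <= r)%N -> (r ^ 8 <= n < r.+1 ^ 8)%N ->
  prob_bad m n * INR (r ^ 2) <= INR (bad_const m).
Proof.
move=> m_gt0 r_large r_root.
have fact_pos : 0 < INR (2 * m * n)`! by apply: lt_0_INR; apply/ltP; exact: fact_gt0.
have card_le : INR #|[set s : 'S_(2 * m * n) | bad s]| * INR (r ^ 2) <=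
    INR (bad_const m) * INR (2 * m * n)`!.
  by rewrite -!mult_INR; apply: le_INR; apply/leP; exact: card_bad_le.
rewrite /prob_bad cardsT card_Sn; apply: (Rmult_le_reg_r _ _ _ fact_pos).
move: (INR #|_|) (INR (2 * m * n)`!) fact_pos card_le => X F F_pos card_le.
by have -> : X / F * INR (r ^ 2) * F = X * INR (r ^ 2) by field; lra.
Qed.

Theorem lemma4 (m : nat) (hm : (1 <= m)%N) :
  forall eps : R, Rlt 0 eps ->
  exists N : nat, forall n : nat, (N <= n)%N -> Rle (prob_bad m n) eps.
Proof.
move=> eps eps_pos.
have [R1 R1_gt] := INR_unbounded (INR (bad_const m) / eps).
exists (maxn (6 * m + 10) R1 ^ 8)%N => n le_n.
have [r r_root] := exists_iroot n (isT : 0 < 8)%N.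
have /andP[_ lt_nr] := r_root.
have : (maxn (6 * m + 10) R1 < r.+1)%N.
  by rewrite -(ltn_exp2r _ _ (isT : 0 < 8)%N) (leq_ltn_trans le_n).
rewrite ltnS geq_max => /andP[r_large le_R1r].
have bound := prob_bad_le hm r_large r_root.
have r2_ge : INR R1 <= INR (r ^ 2).
  by apply: le_INR; apply/leP; rewrite (leq_trans le_R1r) // -{1}(expn1 r) leq_pexp2l //; lia.
have C_lt : INR (bad_const m) < eps * INR (r ^ 2).
  have -> : INR (bad_const m) = INR (bad_const m) / eps * eps by field; lra.
  by rewrite Rmult_comm; apply: Rmult_lt_compat_l => //; lra.
have R2_pos : 0 < INR (r ^ 2) by apply: lt_0_INR; apply/ltP; rewrite expn_gt0; lia.
move: (prob_bad m n) (INR (r ^ 2)) (INR (bad_const m)) bound C_lt R2_pos => p R2 C; nra.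
Qed.
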